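(* Let $\sigma,b$ and $x$ be as in the context. There exist $\rho,\delta^*\in1/\mathcal{C}$ such that for every $y\in\mathbb{R}^2$ and every $\delta\le\delta^*$: if $|x-y|_{A_\delta(x)}\le\rho$, then for all $\xi\in\mathbb{R}^2$ \[ \frac14|\xi|_{A_\delta(x)}\le|\xi|_{A_\delta(y)}\le4|\xi|_{A_\delta(x)}. \]
   Context: $\sigma,b:\mathbb{R}^2\to\mathbb{R}^2$ are $C^3$; $\partial_gf=\sum_ig^i\partial_{x_i}f$, $[f,g]=\partial_gf-\partial_fg$. $A_\delta(z)$ is the matrix with columns $\delta^{1/2}\sigma(z),\delta^{3/2}[b,\sigma](z)$, and $|\xi|_{A_\delta(z)}=|A_\delta(z)^{-1}\xi|$. $\lambda(z)$ is the smallest eigenvalue of $A(z)A(z)^T$ with $A(z)$ having columns $\sigma(z),[b,\sigma](z)$; $n(z)=\sum_{k=0}^3\sum_{|\alpha|=k}(|\partial^\alpha b(z)|+|\partial^\alpha\sigma(z)|)$. Local hypotheses: $\lambda(z)\ge\Lambda\in(0,1]$, $n(z)\le N$ ($N\ge1$) for $|z-x|<1$; there is a differentiable $\kappa_\sigma$ with $\partial_\sigma\sigma=\kappa_\sigma\sigma$ and $|\kappa_\sigma|,|\nabla\kappa_\sigma|\le n$. $\mathcal{C}=\{K(N/\Lambda)^q:K,q\ge1\text{ universal}\}$, $1/\mathcal{C}=\{c:1/c\in\mathcal{C}\}$. *)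

From Stdlib Require Import Reals List.
From Coquelicot Require Import Coquelicot.
Open Scope R_scope.

Definition pt := (R * R)%type.
Definition vadd (u v : pt) : pt := (fst u + fst v, snd u + snd v).
Definition vsub (u v : pt) : pt := (fst u - fst v, snd u - snd v).
Definition vscal (a : R) (u : pt) : pt := (a * fst u, a * snd u).
Definition enorm (u : pt) : R := sqrt (fst u ^ 2 + snd u ^ 2).

Definition slice1 (g : pt -> R) (z : pt) : R -> R := fun t => g (t, snd z).
Definition slice2 (g : pt -> R) (z : pt) : R -> R := fun t => g (fst z, t).
Definition pd1 (g : pt -> R) : pt -> R := fun z => Derive (slice1 g z) (fst z).
Definition pd2 (g : pt -> R) : pt -> R := fun z => Derive (slice2 g z) (snd z).

Fixpoint Ck (k : nat) (g : pt -> R) : Prop :=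
  match k with
  | O => forall z : pt, continuous g z
  | S k' => (forall z : pt, continuous g z) /\
            (forall z : pt, ex_derive (slice1 g z) (fst z) /\
                            ex_derive (slice2 g z) (snd z)) /\
            Ck k' (pd1 g) /\ Ck k' (pd2 g)
  end.

Definition vfield := pt -> pt.
Definition c1 (f : vfield) : pt -> R := fun z => fst (f z).
Definition c2 (f : vfield) : pt -> R := fun z => snd (f z).
Definition Ck_field (k : nat) (f : vfield) : Prop := Ck k (c1 f) /\ Ck k (c2 f).

Definition dalpha_s (a1 a2 : nat) (g : pt -> R) : pt -> R :=
  Nat.iter a1 pd1 (Nat.iter a2 pd2 g).
Definition dalpha (a1 a2 : nat) (f : vfield) : vfield :=
  fun z => (dalpha_s a1 a2 (c1 f) z, dalpha_s a1 a2 (c2 f) z).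

Definition vpd1 (f : vfield) : vfield := dalpha 1 0 f.
Definition vpd2 (f : vfield) : vfield := dalpha 0 1 f.

Definition dirder (g f : vfield) : vfield :=
  fun z => vadd (vscal (fst (g z)) (vpd1 f z)) (vscal (snd (g z)) (vpd2 f z)).

Definition bracket (f g : vfield) : vfield :=
  fun z => vsub (dirder g f z) (dirder f g z).

Definition multi_indices_le3 : list (nat * nat) :=
  (0,0)%nat :: (1,0)%nat :: (0,1)%nat :: (2,0)%nat :: (1,1)%nat :: (0,2)%nat
  :: (3,0)%nat :: (2,1)%nat :: (1,2)%nat :: (0,3)%nat :: nil.
Definition nfun (b sigma : vfield) (z : pt) : R :=
  fold_right Rplus 0
    (map (fun a => enorm (dalpha (fst a) (snd a) b z)
                   + enorm (dalpha (fst a) (snd a) sigma z)) multi_indices_le3).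

Record mat2 := Mat2 { col1 : pt ; col2 : pt }.
Definition mapply (M : mat2) (v : pt) : pt :=
  vadd (vscal (fst v) (col1 M)) (vscal (snd v) (col2 M)).
Definition mtrans (M : mat2) : mat2 :=
  Mat2 (fst (col1 M), fst (col2 M)) (snd (col1 M), snd (col2 M)).
Definition mmul (M P : mat2) : mat2 :=
  Mat2 (mapply M (col1 P)) (mapply M (col2 P)).
Definition mdet (M : mat2) : R :=
  fst (col1 M) * snd (col2 M) - fst (col2 M) * snd (col1 M).
Definition minv (M : mat2) : mat2 :=
  Mat2 (vscal (/ mdet M) (snd (col2 M), - snd (col1 M)))
       (vscal (/ mdet M) (- fst (col2 M), fst (col1 M))).

Definition is_eigenvalue (M : mat2) (l : R) : Prop :=
  exists v : pt, v <> (0, 0) /\ mapply M v = vscal l v.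

Definition Amat (b sigma : vfield) (z : pt) : mat2 :=
  Mat2 (sigma z) (bracket b sigma z).
(* lambda(z) >= L : smallest eigenvalue of A A^T is >= L,
   i.e. every (real) eigenvalue of the symmetric matrix A A^T is >= L *)
Definition lambda_ge (b sigma : vfield) (z : pt) (L : R) : Prop :=
  forall l, is_eigenvalue (mmul (Amat b sigma z) (mtrans (Amat b sigma z))) l -> L <= l.

Definition Adelta (b sigma : vfield) (delta : R) (z : pt) : mat2 :=
  Mat2 (vscal (sqrt delta) (sigma z)) (vscal (delta * sqrt delta) (bracket b sigma z)).
Definition normA (M : mat2) (xi : pt) : R := enorm (mapply (minv M) xi).

Definition local_hyps (b sigma : vfield) (kappa : pt -> R) (x : pt) (N L : R) : Prop :=
  Ck_field 3 b /\ Ck_field 3 sigma /\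
  0 < L /\ L <= 1 /\ 1 <= N /\
  (forall z : pt, enorm (vsub z x) < 1 ->
     lambda_ge b sigma z L /\ nfun b sigma z <= N) /\
  (forall z : pt, ex_filterdiff kappa (locally z)) /\
  (forall z : pt, enorm (vsub z x) < 1 ->
     dirder sigma sigma z = vscal (kappa z) (sigma z) /\
     Rabs (kappa z) <= nfun b sigma z /\
     enorm (pd1 kappa z, pd2 kappa z) <= nfun b sigma z).

(* an element of 1/C : 1 / (K (N/L)^q) with universal K, q >= 1 *)
Definition invC (K q N L : R) : R := / (K * Rpower (N / L) q).

From Stdlib Require Import Reals Lra Psatz List.
From Coquelicot Require Import Coquelicot.
Open Scope R_scope.

(* Put [M = A_delta(x)], [M' = A_delta(y)] and [E = M^-1 (M' - M)].  Then
   [M^-1 xi = (1 + E) M'^-1 xi], so both inequalities hold as soon as the l1-norms of the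
   columns of [E] add up to at most 1/2.  Write [x - y = M w] with [|w| <= rho]: the
   displacement [y - x] is O(rho delta^(1/2)), while [M^-1] costs O(delta^(-3/2) / Lambda).
   The second column of [E] is [delta^(3/2) M^-1 ([b,sigma](y) - [b,sigma](x))], hence O(rho).
   The first is [delta^(1/2) M^-1 (sigma(y) - sigma(x))]; to first order
   [sigma(y) - sigma(x) = -w_1 delta^(1/2) D sigma sigma - w_2 delta^(3/2) D sigma [b,sigma]]
   at [x], and [D sigma sigma = kappa sigma] makes the first term a multiple of [sigma(x)],
   on which [M^-1] costs only delta^(-1/2).  The second term and the O(rho^2 delta) Taylor
   remainder are then O(rho) after applying [M^-1].  All constants are powers of [N / Lambda]. *)

(** * Norms on R^2 *)

Definition l1 (v : pt) : R := Rabs (fst v) + Rabs (snd v).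

Lemma l1_vsub u v : l1 (vsub u v) = Rabs (fst u - fst v) + Rabs (snd u - snd v).
Proof. reflexivity. Qed.

Lemma l1_ge0 v : 0 <= l1 v.
Proof. unfold l1; pose proof (Rabs_pos (fst v)); pose proof (Rabs_pos (snd v)); lra. Qed.

Lemma l1_add u v : l1 (vadd u v) <= l1 u + l1 v.
Proof.
  unfold l1, vadd; cbn [fst snd].
  pose proof (Rabs_triang (fst u) (fst v)); pose proof (Rabs_triang (snd u) (snd v)); lra.
Qed.

Lemma l1_sub u v : l1 (vsub u v) <= l1 u + l1 v.
Proof.
  unfold l1, vsub, Rminus; cbn [fst snd].
  pose proof (Rabs_triang (fst u) (- fst v)); pose proof (Rabs_triang (snd u) (- snd v)).
  rewrite !Rabs_Ropp in *; lra.
Qed.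

Lemma l1_scal a v : l1 (vscal a v) = Rabs a * l1 v.
Proof. unfold l1, vscal; cbn [fst snd]; rewrite !Rabs_mult; ring. Qed.

Lemma Rabs_fst_le_enorm u : Rabs (fst u) <= enorm u.
Proof. unfold enorm; rewrite <- sqrt_Rsqr_abs; apply sqrt_le_1_alt; unfold Rsqr; nra. Qed.

Lemma Rabs_snd_le_enorm u : Rabs (snd u) <= enorm u.
Proof. unfold enorm; rewrite <- sqrt_Rsqr_abs; apply sqrt_le_1_alt; unfold Rsqr; nra. Qed.

Lemma enorm_ge0 u : 0 <= enorm u.
Proof. apply sqrt_pos. Qed.

Lemma enorm_le_sqr u c : 0 <= c -> fst u ^ 2 + snd u ^ 2 <= c * c -> enorm u <= c.
Proof. intros Hc H; unfold enorm; rewrite <- (sqrt_square c) by lra; apply sqrt_le_1_alt; lra. Qed.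

Lemma enorm_le_l1 u : enorm u <= l1 u.
Proof.
  unfold l1; apply enorm_le_sqr; [apply l1_ge0|].
  rewrite <- (pow2_abs (fst u)), <- (pow2_abs (snd u)).
  pose proof (Rabs_pos (fst u)); pose proof (Rabs_pos (snd u)); nra.
Qed.

Lemma enorm_sqr u : enorm u * enorm u = fst u ^ 2 + snd u ^ 2.
Proof. apply sqrt_sqrt; nra. Qed.

Lemma enorm_triangle u v : enorm (vadd u v) <= enorm u + enorm v.
Proof.
  pose proof (enorm_ge0 u); pose proof (enorm_ge0 v).
  pose proof (enorm_sqr u) as Eu; pose proof (enorm_sqr v) as Ev.
  assert (Cauchy_Schwarz : fst u * fst v + snd u * snd v <= enorm u * enorm v).
  { destruct (Rle_dec (fst u * fst v + snd u * snd v) 0); [nra|].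
    apply Rsqr_incr_0_var; [unfold Rsqr | nra].
    replace (enorm u * enorm v * (enorm u * enorm v))
      with ((enorm u * enorm u) * (enorm v * enorm v)) by ring.
    rewrite Eu, Ev; pose proof (pow2_ge_0 (fst u * snd v - snd u * fst v)); nra. }
  apply enorm_le_sqr; [lra|]. unfold vadd; cbn [fst snd]; nra.
Qed.

Lemma enorm_sub_le u v : enorm (vsub u v) <= enorm u + enorm v.
Proof.
  replace (vsub u v) with (vadd u (vscal (-1) v))
    by (unfold vsub, vadd, vscal; cbn [fst snd]; f_equal; ring).
  replace (enorm v) with (enorm (vscal (-1) v)); [apply enorm_triangle|].
  unfold enorm, vscal; cbn [fst snd]; f_equal; ring.
Qed.

Lemma enorm_compare u d : enorm d <= enorm u / 2 ->
  / 4 * enorm (vadd u d) <= enorm u /\ enorm u <= 4 * enorm (vadd u d).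
Proof.
  intros Hd.
  pose proof (enorm_triangle u d).
  assert (Eu : u = vsub (vadd u d) d) by (unfold vsub, vadd; destruct u; f_equal; cbn; ring).
  pose proof (enorm_sub_le (vadd u d) d) as Hsub; rewrite <- Eu in Hsub.
  pose proof (enorm_ge0 u); pose proof (enorm_ge0 d); split; lra.
Qed.

Lemma vsub_scal a u v : vsub (vscal a u) (vscal a v) = vscal a (vsub u v).
Proof. unfold vsub, vscal; cbn [fst snd]; f_equal; ring. Qed.

(** * 2x2 matrices *)

Definition msub (M P : mat2) : mat2 :=
  Mat2 (vsub (col1 M) (col1 P)) (vsub (col2 M) (col2 P)).

Lemma mapply_add M u v : mapply M (vadd u v) = vadd (mapply M u) (mapply M v).
Proof. unfold mapply, vadd, vscal; cbn [fst snd]; f_equal; ring. Qed.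

Lemma mapply_scal M a v : mapply M (vscal a v) = vscal a (mapply M v).
Proof. unfold mapply, vadd, vscal; cbn [fst snd]; f_equal; ring. Qed.

Lemma l1_mapply M v :
  l1 (mapply M v) <= Rabs (fst v) * l1 (col1 M) + Rabs (snd v) * l1 (col2 M).
Proof. unfold mapply; rewrite <- !l1_scal; apply l1_add. Qed.

Lemma l1_mapply_le M v K :
  l1 (col1 M) <= K -> l1 (col2 M) <= K -> l1 (mapply M v) <= K * l1 v.
Proof.
  intros H1 H2; eapply Rle_trans; [apply l1_mapply|]; unfold l1 at 3.
  pose proof (Rabs_pos (fst v)); pose proof (Rabs_pos (snd v)); nra.
Qed.

Lemma minv_right M v : mdet M <> 0 -> mapply M (mapply (minv M) v) = v.
Proof.
  destruct M as [[a c] [b d]], v as [v1 v2]; unfold mdet; cbn [fst snd col1 col2]; intros H.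
  unfold mapply, minv, mdet, vadd, vscal; cbn [fst snd col1 col2]; f_equal; field; auto.
Qed.

Lemma minv_col1 M : mdet M <> 0 -> mapply (minv M) (col1 M) = (1, 0).
Proof.
  destruct M as [[a c] [b d]]; unfold mdet; cbn [fst snd col1 col2]; intros H.
  unfold mapply, minv, mdet, vadd, vscal; cbn [fst snd col1 col2]; f_equal; field; auto.
Qed.

Lemma minv_mapply_perturb M M' u : mdet M <> 0 ->
  mapply (minv M) (mapply M' u) = vadd u (mapply (mmul (minv M) (msub M' M)) u).
Proof.
  destruct M as [[a c] [b d]], M' as [[a' c'] [b' d']], u as [u1 u2].
  unfold mdet; cbn [fst snd col1 col2]; intros H.
  unfold mmul, msub, mapply, minv, mdet, vsub, vadd, vscal; cbn [fst snd col1 col2].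
  f_equal; field; auto.
Qed.

Lemma normA_compare M M' xi :
  mdet M <> 0 -> mdet M' <> 0 ->
  l1 (col1 (mmul (minv M) (msub M' M))) + l1 (col2 (mmul (minv M) (msub M' M))) <= 1 / 2 ->
  / 4 * normA M xi <= normA M' xi /\ normA M' xi <= 4 * normA M xi.
Proof.
  intros HM HM' HE. unfold normA.
  set (u := mapply (minv M') xi).
  replace xi with (mapply M' u) at 1 2 by (apply minv_right; auto).
  rewrite minv_mapply_perturb by auto.
  apply enorm_compare.
  eapply Rle_trans; [apply enorm_le_l1|]; eapply Rle_trans; [apply l1_mapply|].
  pose proof (Rabs_fst_le_enorm u); pose proof (Rabs_snd_le_enorm u).
  pose proof (l1_ge0 (col1 (mmul (minv M) (msub M' M)))).
  pose proof (l1_ge0 (col2 (mmul (minv M) (msub M' M)))).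
  pose proof (Rabs_pos (fst u)); pose proof (Rabs_pos (snd u)); nra.
Qed.

Lemma mdet_scaled A s t :
  mdet (Mat2 (vscal s (col1 A)) (vscal t (col2 A))) = s * t * mdet A.
Proof. unfold mdet, vscal; cbn [fst snd col1 col2]; ring. Qed.

(* Cramer's rule: the [1/s] and [1/t] of the inverse are compensated by [t <= s]. *)
Lemma l1_minv_scaled A s t v : 0 < t <= s -> mdet A <> 0 ->
  t * Rabs (mdet A) * l1 (mapply (minv (Mat2 (vscal s (col1 A)) (vscal t (col2 A)))) v)
  <= (l1 (col1 A) + l1 (col2 A)) * l1 v.
Proof.
  destruct A as [[a c] [b d]], v as [v1 v2]; intros Hts HD.
  unfold mdet in *; cbn [fst snd col1 col2] in *.
  set (D := a * d - b * c) in *.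
  unfold l1, mapply, minv, mdet, vadd, vscal; cbn [fst snd col1 col2].
  set (c1 := v1 * (_ * (t * d)) + _).
  set (c2 := v1 * (_ * - (s * c)) + _).
  assert (Hden : s * a * (t * d) - t * b * (s * c) <> 0).
  { replace (s * a * (t * d) - t * b * (s * c)) with (s * t * D) by (unfold D; ring).
    repeat apply Rmult_integral_contrapositive_currified; lra. }
  assert (E1 : t * D * c1 = t / s * (d * v1 - b * v2))
    by (unfold c1, D in *; field; repeat split; auto; lra).
  assert (E2 : t * D * c2 = a * v2 - c * v1)
    by (unfold c2, D in *; field; repeat split; auto; lra).
  assert (Hts1 : Rabs (t / s) <= 1).
  { rewrite Rabs_pos_eq by (apply Rdiv_le_0_compat; lra).
    apply Rmult_le_reg_r with s; [lra|]; unfold Rdiv; rewrite Rmult_assoc, Rinv_l; lra. }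
  replace (t * Rabs D * (Rabs c1 + Rabs c2)) with (Rabs (t * D * c1) + Rabs (t * D * c2))
    by (rewrite !Rabs_mult, (Rabs_pos_eq t) by lra; ring).
  rewrite E1, E2, Rabs_mult.
  assert (B1 : Rabs (d * v1 - b * v2) <= (Rabs b + Rabs d) * (Rabs v1 + Rabs v2)).
  { unfold Rminus; eapply Rle_trans; [apply Rabs_triang|]; rewrite Rabs_Ropp, !Rabs_mult.
    pose proof (Rabs_pos b); pose proof (Rabs_pos d);
    pose proof (Rabs_pos v1); pose proof (Rabs_pos v2); nra. }
  assert (B2 : Rabs (a * v2 - c * v1) <= (Rabs a + Rabs c) * (Rabs v1 + Rabs v2)).
  { unfold Rminus; eapply Rle_trans; [apply Rabs_triang|]; rewrite Rabs_Ropp, !Rabs_mult.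
    pose proof (Rabs_pos a); pose proof (Rabs_pos c);
    pose proof (Rabs_pos v1); pose proof (Rabs_pos v2); nra. }
  pose proof (Rabs_pos (t / s)); pose proof (Rabs_pos (d * v1 - b * v2)); nra.
Qed.

(* Test the eigenvalue bound on the smaller eigenvalue [l = (p + r - sqrt D) / 2],
   with eigenvector [(q, l - p)]. *)
Lemma sym2_det_ge (p q r L : R) :
  0 < L -> 0 <= p -> 0 <= r ->
  (forall l v1 v2, (v1 <> 0 \/ v2 <> 0) -> v1 * p + v2 * q = l * v1 ->
      v1 * q + v2 * r = l * v2 -> L <= l) ->
  L * L <= p * r - q * q.
Proof.
  intros HL Hp Hr Heig.
  destruct (Req_dec q 0) as [Hq|Hq].
  - subst q.
    assert (L <= p) by (apply (Heig p 1 0); [left | |]; lra).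
    assert (L <= r) by (apply (Heig r 0 1); [right | |]; lra).
    nra.
  - set (D := (p - r) * (p - r) + 4 * q * q).
    assert (HD : 0 <= D)
      by (unfold D; pose proof (Rle_0_sqr (p - r)); pose proof (Rle_0_sqr q);
          unfold Rsqr in *; lra).
    set (sD := sqrt D).
    assert (HsD : sD * sD = D) by (apply sqrt_sqrt; auto).
    assert (HsD0 : 0 <= sD) by apply sqrt_pos.
    assert (Hl : L <= (p + r - sD) / 2).
    { apply (Heig _ q ((p + r - sD) / 2 - p)); [left; auto | ring |].
      assert (E : q * q + ((p + r - sD) / 2 - p) * r - (p + r - sD) / 2 * ((p + r - sD) / 2 - p)
                  = (D - sD * sD) / 4) by (unfold D; field).
      rewrite HsD in E; lra. }
    assert (sD * sD <= (p + r - 2 * L) * (p + r - 2 * L)) by (apply Rmult_le_compat; lra).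
    unfold D in HsD; nra.
Qed.

Lemma mdet_ge_of_eigen_ge (A : mat2) (L : R) :
  0 < L -> (forall l, is_eigenvalue (mmul A (mtrans A)) l -> L <= l) ->
  L <= Rabs (mdet A).
Proof.
  intros HL Heig.
  assert (Hsq : L * L <= mdet A * mdet A).
  { destruct A as [[a c] [b d]].
    unfold is_eigenvalue, mmul, mtrans, mapply, vadd, vscal in Heig;
      cbn [fst snd col1 col2] in Heig.
    unfold mdet; cbn [fst snd col1 col2].
    replace ((a * d - b * c) * (a * d - b * c))
      with ((a * a + b * b) * (c * c + d * d) - (a * c + b * d) * (a * c + b * d)) by ring.
    apply sym2_det_ge; try nra.
    intros l v1 v2 Hv E1 E2; apply Heig; exists (v1, v2); split.
    - intro E; inversion E; lra.
    - cbn [fst snd]; f_equal; lra. }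
  rewrite <- (Rabs_pos_eq L) by lra; apply Rsqr_le_abs_0; unfold Rsqr; lra.
Qed.

(** * Mean value estimates on boxes *)

Lemma mvt_Derive (f : R -> R) (a b : R) : (forall t, ex_derive f t) ->
  exists c, Rmin a b <= c <= Rmax a b /\ f b - f a = Derive f c * (b - a).
Proof.
  intros Hf; apply MVT_gen.
  - intros t _; apply Derive_correct, Hf.
  - intros t _; apply derivable_continuous_pt, ex_derive_Reals_0, Hf.
Qed.

Lemma mvt_abs_le (f : R -> R) (a b K : R) :
  (forall t, ex_derive f t) ->
  (forall t, Rmin a b <= t <= Rmax a b -> Rabs (Derive f t) <= K) ->
  Rabs (f b - f a) <= K * Rabs (b - a).
Proof.
  intros Hf HK; destruct (mvt_Derive f a b Hf) as [c [Hc ->]].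
  rewrite Rabs_mult; apply Rmult_le_compat_r; [apply Rabs_pos | auto].
Qed.

Lemma Rabs_derive_le_of_lipschitz (phi : R -> R) (a D C e : R) :
  0 < e -> is_derive phi a D ->
  (forall s, Rabs (s - a) < e -> Rabs (phi s - phi a) <= C * Rabs (s - a)) ->
  Rabs D <= C.
Proof.
  intros He HD Hlip; apply is_derive_Reals in HD.
  destruct (Rle_dec (Rabs D) C) as [|Hn]; auto; exfalso.
  destruct (HD ((Rabs D - C) / 2) ltac:(lra)) as [[del Hdel0] Hdel]; cbn in Hdel.
  set (h := Rmin (del / 2) (e / 2)).
  assert (Hh : 0 < h) by (apply Rmin_pos; lra).
  assert (Hhd : h < del) by (pose proof (Rmin_l (del / 2) (e / 2)); unfold h in *; lra).
  assert (Hhe : h < e) by (pose proof (Rmin_r (del / 2) (e / 2)); unfold h in *; lra).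
  specialize (Hdel h (Rgt_not_eq _ _ Hh) ltac:(rewrite Rabs_pos_eq; lra)).
  specialize (Hlip (a + h)); replace (a + h - a) with h in Hlip by ring.
  rewrite Rabs_pos_eq in Hlip by lra; specialize (Hlip ltac:(lra)).
  assert (Hq : Rabs ((phi (a + h) - phi a) / h) <= C).
  { rewrite Rabs_div, (Rabs_pos_eq h) by lra.
    apply Rmult_le_reg_r with h; auto; unfold Rdiv; rewrite Rmult_assoc, Rinv_l; lra. }
  pose proof (Rabs_triang_inv D ((phi (a + h) - phi a) / h)).
  rewrite <- Rabs_Ropp in Hdel.
  replace (- ((phi (a + h) - phi a) / h - D)) with (D - (phi (a + h) - phi a) / h) in Hdel
    by ring.
  lra.
Qed.

Lemma Rabs_sub_le_between a b t c r : Rmin a b <= t <= Rmax a b ->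
  Rabs (a - c) <= r -> Rabs (b - c) <= r -> Rabs (t - c) <= r.
Proof.
  intros [H1 H2] Ha Hb; unfold Rmin, Rmax in *.
  apply Rabs_le_between in Ha; apply Rabs_le_between in Hb.
  destruct (Rle_dec a b); apply Rabs_le; lra.
Qed.

Lemma Rabs_sub_le_dist_between a b t : Rmin a b <= t <= Rmax a b ->
  Rabs (t - a) <= Rabs (b - a).
Proof.
  intros [H1 H2]; unfold Rmin, Rmax in *.
  destruct (Rle_dec a b); [rewrite !Rabs_pos_eq | rewrite !Rabs_left1]; lra.
Qed.

Lemma Ck_S_Ck k g : Ck (S k) g -> Ck k g.
Proof.
  revert g; induction k as [|k IH]; intros g Hg.
  - exact (proj1 Hg).
  - destruct Hg as [Hc [Hex [H1 H2]]].
    exact (conj Hc (conj Hex (conj (IH _ H1) (IH _ H2)))).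
Qed.

Definition partials_exist (g : pt -> R) : Prop := forall z : pt,
  ex_derive (slice1 g z) (fst z) /\ ex_derive (slice2 g z) (snd z).

Lemma Ck2_partials_exist g :
  Ck 2 g -> partials_exist g /\ partials_exist (pd1 g) /\ partials_exist (pd2 g).
Proof. intros [_ [H0 [[_ [H1 _]] [_ [H2 _]]]]]; auto. Qed.

Lemma ex_derive_fst g a c : partials_exist g -> ex_derive (fun t => g (t, c)) a.
Proof. intros H; exact (proj1 (H (a, c))). Qed.

Lemma ex_derive_snd g a c : partials_exist g -> ex_derive (fun t => g (a, t)) c.
Proof. intros H; exact (proj2 (H (a, c))). Qed.

Definition inbox (x : pt) (r : R) (z : pt) : Prop :=
  Rabs (fst z - fst x) <= r /\ Rabs (snd z - snd x) <= r.

Lemma inbox_center x r : 0 <= r -> inbox x r x.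
Proof. intros; split; rewrite Rminus_diag, Rabs_R0; lra. Qed.

Lemma inbox_le x r r' z : r <= r' -> inbox x r z -> inbox x r' z.
Proof. intros ? [? ?]; split; lra. Qed.

Lemma inbox_of_l1 x y r : l1 (vsub y x) <= r -> inbox x r y.
Proof.
  unfold l1, vsub; cbn [fst snd]; intros.
  pose proof (Rabs_pos (fst y - fst x)); pose proof (Rabs_pos (snd y - snd x)); split; lra.
Qed.

Lemma inbox_enorm_lt x z : inbox x (1 / 4) z -> enorm (vsub z x) < 1.
Proof.
  intros [H1 H2]; pose proof (enorm_le_l1 (vsub z x)); unfold l1, vsub in *; cbn in *; lra.
Qed.

Section BoxEstimates.

Variables (x : pt) (K : R).

Lemma lipschitz_box g p q : partials_exist g ->
  (forall z, inbox x (1 / 4) z -> Rabs (pd1 g z) <= K /\ Rabs (pd2 g z) <= K) ->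
  inbox x (1 / 8) p -> inbox x (1 / 8) q ->
  Rabs (g p - g q) <= K * l1 (vsub p q).
Proof.
  intros Hg HK [Hp1 Hp2] [Hq1 Hq2]; destruct p as [p1 p2], q as [q1 q2].
  unfold l1, vsub; cbn [fst snd] in *.
  replace (g (p1, p2) - g (q1, q2))
    with ((g (p1, p2) - g (q1, p2)) + (g (q1, p2) - g (q1, q2))) by ring.
  assert (A1 : Rabs (g (p1, p2) - g (q1, p2)) <= K * Rabs (p1 - q1)).
  { apply (mvt_abs_le (fun t => g (t, p2))); [intro; apply ex_derive_fst; auto|].
    intros t Ht; apply (HK (t, p2)); split; cbn [fst snd]; [|lra].
    pose proof (Rabs_sub_le_between _ _ _ (fst x) (1 / 8) Ht Hq1 Hp1); lra. }
  assert (A2 : Rabs (g (q1, p2) - g (q1, q2)) <= K * Rabs (p2 - q2)).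
  { apply (mvt_abs_le (fun t => g (q1, t))); [intro; apply ex_derive_snd; auto|].
    intros t Ht; apply (HK (q1, t)); split; cbn [fst snd]; [lra|].
    pose proof (Rabs_sub_le_between _ _ _ (snd x) (1 / 8) Ht Hq2 Hp2); lra. }
  pose proof (Rabs_triang (g (p1, p2) - g (q1, p2)) (g (q1, p2) - g (q1, q2))); lra.
Qed.

(* Only [pd1 (pd2 g)] is controlled, not [pd2 (pd1 g)], so the variation of
   [pd1 g] in the second variable is read off the difference quotients of
   [s |-> g (s, c) - g (s, d)] rather than by differentiating [pd1 g]. *)
Lemma pd1_lipschitz_snd g a c d : partials_exist g -> partials_exist (pd2 g) ->
  (forall z, inbox x (1 / 4) z -> Rabs (pd1 (pd2 g) z) <= K) ->
  inbox x (1 / 8) (a, c) -> inbox x (1 / 8) (a, d) ->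
  Rabs (pd1 g (a, c) - pd1 g (a, d)) <= K * Rabs (c - d).
Proof.
  intros Hg Hg2 HK [Ha Hc] [_ Hd]; cbn [fst snd] in *.
  apply (Rabs_derive_le_of_lipschitz (fun s => g (s, c) - g (s, d)) a _ _ (1 / 8)); [lra| |].
  - apply (is_derive_minus (fun s => g (s, c)) (fun s => g (s, d)));
      apply Derive_correct, ex_derive_fst; auto.
  - intros s Hs.
    replace (g (s, c) - g (s, d) - (g (a, c) - g (a, d))) with
      ((fun t => g (s, t) - g (a, t)) c - (fun t => g (s, t) - g (a, t)) d) by ring.
    replace (K * Rabs (c - d) * Rabs (s - a)) with (K * Rabs (s - a) * Rabs (c - d)) by ring.
    apply (mvt_abs_le (fun t => g (s, t) - g (a, t)) d c).
    + intro t; apply (ex_derive_minus (fun t => g (s, t)) (fun t => g (a, t)));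
        apply ex_derive_snd; auto.
    + intros t Ht; rewrite Derive_minus by (apply ex_derive_snd; auto).
      apply (mvt_abs_le (fun r => pd2 g (r, t))); [intro; apply ex_derive_fst; auto|].
      intros r Hr; apply (HK (r, t)); split; cbn [fst snd].
      * pose proof (Rabs_sub_le_dist_between _ _ _ Hr).
        pose proof (Rabs_triang (r - a) (a - fst x));
        replace (r - a + (a - fst x)) with (r - fst x) in * by ring; lra.
      * pose proof (Rabs_sub_le_between _ _ _ (snd x) (1 / 8) Ht Hd Hc); lra.
Qed.

Definition derivs2_le (g : pt -> R) (z : pt) : Prop :=
  Rabs (g z) <= K /\ Rabs (pd1 g z) <= K /\ Rabs (pd2 g z) <= K /\
  Rabs (pd1 (pd1 g) z) <= K /\ Rabs (pd1 (pd2 g) z) <= K /\ Rabs (pd2 (pd2 g) z) <= K.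

Variable g : pt -> R.
Hypothesis Hg : Ck 2 g.
Hypothesis Hbnd : forall z, inbox x (1 / 4) z -> derivs2_le g z.

Lemma derivs_lipschitz y : inbox x (1 / 8) y ->
  Rabs (g y - g x) <= K * l1 (vsub y x) /\
  Rabs (pd1 g y - pd1 g x) <= K * l1 (vsub y x) /\
  Rabs (pd2 g y - pd2 g x) <= K * l1 (vsub y x).
Proof.
  intros Hy; destruct (Ck2_partials_exist g Hg) as [P0 [P1 P2]].
  pose proof (inbox_center x (1 / 8) ltac:(lra)) as Hx.
  split; [|split].
  - apply lipschitz_box; auto; intros z Hz; destruct (Hbnd z Hz) as [_ [? [? _]]]; auto.
  - rewrite (surjective_pairing x); destruct y as [y1 y2], Hy as [Hy1 Hy2].
    set (x1 := fst x) in *; set (x2 := snd x) in *.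
    unfold l1, vsub; cbn [fst snd] in *.
    replace (pd1 g (y1, y2) - pd1 g (x1, x2)) with
      ((pd1 g (y1, y2) - pd1 g (x1, y2)) + (pd1 g (x1, y2) - pd1 g (x1, x2))) by ring.
    assert (A1 : Rabs (pd1 g (y1, y2) - pd1 g (x1, y2)) <= K * Rabs (y1 - x1)).
    { apply (mvt_abs_le (fun t => pd1 g (t, y2))); [intro; apply ex_derive_fst; auto|].
      intros t Ht; apply (Hbnd (t, y2)); split; cbn [fst snd]; fold x1 x2; [|lra].
      pose proof (Rabs_sub_le_dist_between _ _ _ Ht); lra. }
    assert (A2 : Rabs (pd1 g (x1, y2) - pd1 g (x1, x2)) <= K * Rabs (y2 - x2)).
    { apply pd1_lipschitz_snd; auto.
      - intros z Hz; destruct (Hbnd z Hz) as [_ [_ [_ [_ [? _]]]]]; auto.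
      - split; cbn [fst snd]; fold x1 x2; [rewrite Rminus_diag, Rabs_R0|]; lra. }
    pose proof (Rabs_triang (pd1 g (y1, y2) - pd1 g (x1, y2))
                            (pd1 g (x1, y2) - pd1 g (x1, x2))); lra.
  - apply lipschitz_box; auto; intros z Hz; destruct (Hbnd z Hz) as [_ [_ [_ [_ [? ?]]]]]; auto.
Qed.

Lemma taylor1_le y : inbox x (1 / 8) y ->
  Rabs (g y - g x - (fst (vsub y x) * pd1 g x + snd (vsub y x) * pd2 g x))
    <= K * (l1 (vsub y x) * l1 (vsub y x)).
Proof.
  intros Hy; destruct (Ck2_partials_exist g Hg) as [P0 [P1 P2]].
  assert (HK : 0 <= K).
  { destruct (Hbnd x (inbox_center x (1 / 4) ltac:(lra))) as [H _];
      pose proof (Rabs_pos (g x)); lra. }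
  rewrite (surjective_pairing x); destruct y as [y1 y2], Hy as [Hy1 Hy2].
  set (x1 := fst x) in *; set (x2 := snd x) in *.
  unfold l1, vsub; cbn [fst snd] in *.
  destruct (mvt_Derive (fun t => g (y1, t)) x2 y2) as [e [He Ee]];
    [intro; apply ex_derive_snd; auto|].
  destruct (mvt_Derive (fun t => g (t, x2)) x1 y1) as [c [Hc Ec]];
    [intro; apply ex_derive_fst; auto|].
  change (Derive (fun t => g (y1, t)) e) with (pd2 g (y1, e)) in Ee.
  change (Derive (fun t => g (t, x2)) c) with (pd1 g (c, x2)) in Ec.
  replace (g (y1, y2) - g (x1, x2) - ((y1 - x1) * pd1 g (x1, x2) + (y2 - x2) * pd2 g (x1, x2)))
    with ((pd2 g (y1, e) - pd2 g (x1, x2)) * (y2 - x2)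
          + (pd1 g (c, x2) - pd1 g (x1, x2)) * (y1 - x1)) by lra.
  pose proof (Rabs_sub_le_dist_between _ _ _ He).
  pose proof (Rabs_sub_le_dist_between _ _ _ Hc).
  assert (B2 : Rabs (pd2 g (y1, e) - pd2 g (x1, x2)) <= K * (Rabs (y1 - x1) + Rabs (y2 - x2))).
  { eapply Rle_trans.
    - apply (lipschitz_box (pd2 g)); auto.
      + intros z Hz; destruct (Hbnd z Hz) as [_ [_ [_ [_ [? ?]]]]]; auto.
      + split; cbn [fst snd]; fold x1 x2; lra.
      + split; cbn [fst snd]; fold x1 x2; rewrite Rminus_diag, Rabs_R0; lra.
    - unfold l1, vsub; cbn [fst snd]; apply Rmult_le_compat_l; lra. }
  assert (B1 : Rabs (pd1 g (c, x2) - pd1 g (x1, x2)) <= K * Rabs (y1 - x1)).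
  { eapply Rle_trans.
    - apply (mvt_abs_le (fun t => pd1 g (t, x2)) x1 c); [intro; apply ex_derive_fst; auto|].
      intros t Ht; apply (Hbnd (t, x2)); split; cbn [fst snd]; fold x1 x2;
        [pose proof (Rabs_sub_le_dist_between _ _ _ Ht) | rewrite Rminus_diag, Rabs_R0]; lra.
    - apply Rmult_le_compat_l; lra. }
  pose proof (Rabs_pos (y1 - x1)); pose proof (Rabs_pos (y2 - x2)).
  eapply Rle_trans; [apply Rabs_triang|]; rewrite !Rabs_mult.
  pose proof (Rabs_pos (pd2 g (y1, e) - pd2 g (x1, x2))).
  pose proof (Rabs_pos (pd1 g (c, x2) - pd1 g (x1, x2))).
  nra.
Qed.

End BoxEstimates.

(** * Vector fields and the Lie bracket *)

Lemma le_fold_right_Rplus {A : Type} (f : A -> R) (l : list A) (a : A) :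
  (forall a, 0 <= f a) -> In a l -> f a <= fold_right Rplus 0 (map f l).
Proof.
  intros Hf; induction l as [|a' l IH]; intros Hin; [destruct Hin|].
  assert (0 <= fold_right Rplus 0 (map f l)).
  { clear IH Hin; induction l as [|a'' l IH']; cbn; [lra|]; pose proof (Hf a''); lra. }
  destruct Hin as [<-|Hin]; cbn; [lra|]; pose proof (IH Hin); pose proof (Hf a'); lra.
Qed.

Lemma enorm_dalpha_le_nfun b sigma z a1 a2 : In (a1, a2) multi_indices_le3 ->
  enorm (dalpha a1 a2 b z) <= nfun b sigma z /\ enorm (dalpha a1 a2 sigma z) <= nfun b sigma z.
Proof.
  intros Hin.
  pose proof (le_fold_right_Rplus
    (fun a => enorm (dalpha (fst a) (snd a) b z) + enorm (dalpha (fst a) (snd a) sigma z))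
    multi_indices_le3 (a1, a2)) as H.
  cbn [fst snd] in H; unfold nfun.
  assert (Hpos : forall a : nat * nat,
    0 <= enorm (dalpha (fst a) (snd a) b z) + enorm (dalpha (fst a) (snd a) sigma z)).
  { intro; pose proof (enorm_ge0 (dalpha (fst a) (snd a) b z));
      pose proof (enorm_ge0 (dalpha (fst a) (snd a) sigma z)); lra. }
  specialize (H Hpos Hin).
  pose proof (enorm_ge0 (dalpha a1 a2 b z)); pose proof (enorm_ge0 (dalpha a1 a2 sigma z)); lra.
Qed.

Definition vderivs2_le (K : R) (f : vfield) (z : pt) : Prop :=
  derivs2_le K (c1 f) z /\ derivs2_le K (c2 f) z.

Lemma vderivs2_le_of_dalpha f z N :
  (forall a1 a2, In (a1, a2) multi_indices_le3 -> enorm (dalpha a1 a2 f z) <= N) ->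
  vderivs2_le N f z.
Proof.
  intros H.
  assert (H1 : forall a1 a2, In (a1, a2) multi_indices_le3 ->
    Rabs (dalpha_s a1 a2 (c1 f) z) <= N /\ Rabs (dalpha_s a1 a2 (c2 f) z) <= N).
  { intros a1 a2 Hin; specialize (H a1 a2 Hin).
    pose proof (Rabs_fst_le_enorm (dalpha a1 a2 f z));
      pose proof (Rabs_snd_le_enorm (dalpha a1 a2 f z)); cbn [fst snd dalpha] in *; lra. }
  destruct (H1 0%nat 0%nat ltac:(simpl; tauto)) as [? ?].
  destruct (H1 1%nat 0%nat ltac:(simpl; tauto)) as [? ?].
  destruct (H1 0%nat 1%nat ltac:(simpl; tauto)) as [? ?].
  destruct (H1 2%nat 0%nat ltac:(simpl; tauto)) as [? ?].
  destruct (H1 1%nat 1%nat ltac:(simpl; tauto)) as [? ?].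
  destruct (H1 0%nat 2%nat ltac:(simpl; tauto)) as [? ?].
  repeat split; assumption.
Qed.

Lemma nfun_vderivs2_le b sigma z N : nfun b sigma z <= N ->
  vderivs2_le N sigma z /\ vderivs2_le N b z.
Proof.
  intros H; split; apply vderivs2_le_of_dalpha; intros a1 a2 Hin;
    destruct (enorm_dalpha_le_nfun b sigma z a1 a2 Hin); lra.
Qed.

Definition jac (f : vfield) (z : pt) : mat2 := Mat2 (vpd1 f z) (vpd2 f z).

Lemma vpd1_eq f z : vpd1 f z = (pd1 (c1 f) z, pd1 (c2 f) z).
Proof. reflexivity. Qed.

Lemma vpd2_eq f z : vpd2 f z = (pd2 (c1 f) z, pd2 (c2 f) z).
Proof. reflexivity. Qed.

Lemma l1_bilinear_sub (J J' : mat2) (v v' : pt) (a e : R) :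
  (forall u, l1 (mapply J' u) <= a * l1 u) ->
  (forall u, l1 (mapply (msub J' J) u) <= e * l1 u) ->
  l1 (vsub (mapply J' v') (mapply J v)) <= a * l1 (vsub v' v) + e * l1 v.
Proof.
  intros Ha He.
  replace (vsub (mapply J' v') (mapply J v))
    with (vadd (mapply J' (vsub v' v)) (mapply (msub J' J) v)).
  - eapply Rle_trans; [apply l1_add|]; pose proof (Ha (vsub v' v)); pose proof (He v); lra.
  - destruct J as [[] []], J' as [[] []], v, v'.
    unfold msub, mapply, vsub, vadd, vscal; cbn; f_equal; ring.
Qed.

Section FieldEstimates.

Variables (f : vfield) (x : pt) (K : R).
Hypothesis Hf : Ck_field 2 f.
Hypothesis Hbnd : forall z, inbox x (1 / 4) z -> vderivs2_le K f z.

Lemma l1_field_le z : inbox x (1 / 4) z -> l1 (f z) <= 2 * K.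
Proof. intros Hz; destruct (Hbnd z Hz) as [[? _] [? _]]; unfold l1, c1, c2 in *; lra. Qed.

Lemma l1_jac_le z v : inbox x (1 / 4) z -> l1 (mapply (jac f z) v) <= 2 * K * l1 v.
Proof.
  intros Hz; destruct (Hbnd z Hz) as [[_ [? [? _]]] [_ [? [? _]]]].
  apply l1_mapply_le; cbn [col1 col2 jac]; rewrite ?vpd1_eq, ?vpd2_eq; unfold l1; cbn; lra.
Qed.

Lemma l1_field_lipschitz y : inbox x (1 / 8) y ->
  l1 (vsub (f y) (f x)) <= 2 * K * l1 (vsub y x).
Proof.
  intros Hy; destruct Hf as [H1 H2].
  destruct (derivs_lipschitz x K (c1 f) H1 (fun z Hz => proj1 (Hbnd z Hz)) y Hy) as [? _].
  destruct (derivs_lipschitz x K (c2 f) H2 (fun z Hz => proj2 (Hbnd z Hz)) y Hy) as [? _].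
  rewrite (l1_vsub (f y)); unfold c1, c2 in *; lra.
Qed.

Lemma l1_jac_lipschitz y v : inbox x (1 / 8) y ->
  l1 (mapply (msub (jac f y) (jac f x)) v) <= 2 * K * l1 (vsub y x) * l1 v.
Proof.
  intros Hy; destruct Hf as [H1 H2].
  destruct (derivs_lipschitz x K (c1 f) H1 (fun z Hz => proj1 (Hbnd z Hz)) y Hy) as [_ [? ?]].
  destruct (derivs_lipschitz x K (c2 f) H2 (fun z Hz => proj2 (Hbnd z Hz)) y Hy) as [_ [? ?]].
  apply l1_mapply_le; cbn [col1 col2 msub jac]; rewrite l1_vsub;
    rewrite ?vpd1_eq, ?vpd2_eq; cbn [fst snd]; lra.
Qed.

Lemma l1_taylor1_le y : inbox x (1 / 8) y ->
  l1 (vsub (vsub (f y) (f x)) (mapply (jac f x) (vsub y x)))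
    <= 2 * K * (l1 (vsub y x) * l1 (vsub y x)).
Proof.
  intros Hy; destruct Hf as [H1 H2].
  pose proof (taylor1_le x K (c1 f) H1 (fun z Hz => proj1 (Hbnd z Hz)) y Hy).
  pose proof (taylor1_le x K (c2 f) H2 (fun z Hz => proj2 (Hbnd z Hz)) y Hy).
  set (h := vsub y x) in *.
  rewrite (l1_vsub (vsub (f y) (f x))); unfold jac; rewrite vpd1_eq, vpd2_eq.
  unfold mapply, vadd, vscal, c1, c2 in *; cbn [fst snd vsub col1 col2] in *; lra.
Qed.

End FieldEstimates.

Lemma l1_jac_mapply_lipschitz (f g : vfield) (x : pt) (K : R) y :
  Ck_field 2 f -> Ck_field 2 g ->
  (forall z, inbox x (1 / 4) z -> vderivs2_le K f z) ->
  (forall z, inbox x (1 / 4) z -> vderivs2_le K g z) ->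
  inbox x (1 / 8) y ->
  l1 (vsub (mapply (jac f y) (g y)) (mapply (jac f x) (g x))) <= 8 * (K * K) * l1 (vsub y x).
Proof.
  intros Hf Hg Hfb Hgb Hy.
  assert (Hy4 : inbox x (1 / 4) y) by (apply (inbox_le x (1 / 8)); [lra | auto]).
  assert (Hx4 : inbox x (1 / 4) x) by (apply inbox_center; lra).
  pose proof (l1_field_lipschitz g x K Hg Hgb y Hy).
  pose proof (l1_field_le g x K Hgb x Hx4).
  pose proof (l1_ge0 (vsub y x)); pose proof (l1_ge0 (g x)).
  assert (HK : 0 <= K) by lra.
  eapply Rle_trans; [apply l1_bilinear_sub|].
  - intro u; exact (l1_jac_le f x K Hfb y u Hy4).
  - intro u; exact (l1_jac_lipschitz f x K Hf Hfb y u Hy).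
  - assert (2 * K * l1 (vsub (g y) (g x)) <= 2 * K * (2 * K * l1 (vsub y x)))
      by (apply Rmult_le_compat_l; lra).
    assert (2 * K * l1 (vsub y x) * l1 (g x) <= 2 * K * l1 (vsub y x) * (2 * K))
      by (apply Rmult_le_compat_l; [apply Rmult_le_pos|]; lra).
    lra.
Qed.

Lemma bracket_jac b sigma z :
  bracket b sigma z = vsub (mapply (jac b z) (sigma z)) (mapply (jac sigma z) (b z)).
Proof. reflexivity. Qed.

Section BracketEstimates.

Variables (b sigma : vfield) (x : pt) (K : R).
Hypotheses (Hb : Ck_field 2 b) (Hsigma : Ck_field 2 sigma).
Hypothesis Hbnd : forall z, inbox x (1 / 4) z -> vderivs2_le K sigma z /\ vderivs2_le K b z.

Lemma l1_bracket_le z : inbox x (1 / 4) z -> l1 (bracket b sigma z) <= 8 * (K * K).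
Proof.
  intros Hz; rewrite bracket_jac; eapply Rle_trans; [apply l1_sub|].
  pose proof (l1_jac_le b x K (fun z Hz => proj2 (Hbnd z Hz)) z (sigma z) Hz).
  pose proof (l1_jac_le sigma x K (fun z Hz => proj1 (Hbnd z Hz)) z (b z) Hz).
  pose proof (l1_field_le sigma x K (fun z Hz => proj1 (Hbnd z Hz)) z Hz).
  pose proof (l1_field_le b x K (fun z Hz => proj2 (Hbnd z Hz)) z Hz).
  pose proof (l1_ge0 (sigma z)); pose proof (l1_ge0 (b z)); nra.
Qed.

Lemma l1_bracket_lipschitz y : inbox x (1 / 8) y ->
  l1 (vsub (bracket b sigma y) (bracket b sigma x)) <= 16 * (K * K) * l1 (vsub y x).
Proof.
  intros Hy; rewrite !bracket_jac.
  replace (vsub (vsub (mapply (jac b y) (sigma y)) (mapply (jac sigma y) (b y)))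
                (vsub (mapply (jac b x) (sigma x)) (mapply (jac sigma x) (b x))))
    with (vsub (vsub (mapply (jac b y) (sigma y)) (mapply (jac b x) (sigma x)))
               (vsub (mapply (jac sigma y) (b y)) (mapply (jac sigma x) (b x))))
    by (unfold vsub; cbn; f_equal; ring).
  eapply Rle_trans; [apply l1_sub|].
  pose proof (l1_jac_mapply_lipschitz b sigma x K y Hb Hsigma
                (fun z Hz => proj2 (Hbnd z Hz)) (fun z Hz => proj1 (Hbnd z Hz)) Hy).
  pose proof (l1_jac_mapply_lipschitz sigma b x K y Hsigma Hb
                (fun z Hz => proj1 (Hbnd z Hz)) (fun z Hz => proj2 (Hbnd z Hz)) Hy).
  lra.
Qed.

End BracketEstimates.

(** * Comparison of A_delta(x) and A_delta(y) *)

Section PerturbationEstimate.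

Variables (sigma b : vfield) (kappa : pt -> R) (x y : pt) (N L delta r : R).
Hypotheses (HN : 1 <= N) (HL : 0 < L <= 1) (Hdelta : 0 < delta <= 1).
Hypotheses (Hsigma : Ck_field 2 sigma) (Hb : Ck_field 2 b).
Hypothesis Hbnd : forall z, inbox x (1 / 4) z -> vderivs2_le N sigma z /\ vderivs2_le N b z.
Hypothesis Hdet : forall z, inbox x (1 / 4) z -> L <= Rabs (mdet (Amat b sigma z)).
Hypotheses (Hkappa : dirder sigma sigma x = vscal (kappa x) (sigma x))
           (Hkappa_le : Rabs (kappa x) <= N).
Hypotheses (Hr : 4000 * r * N ^ 7 <= L)
           (Hw : normA (Adelta b sigma delta x) (vsub x y) <= r).

Let s := sqrt delta.
Let t := delta * sqrt delta.
Let M := Adelta b sigma delta x.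
Let w := mapply (minv M) (vsub x y).
Let E := mmul (minv M) (msub (Adelta b sigma delta y) M).

Lemma sqrt_delta_facts : 0 < s /\ s <= 1 /\ t = s * s * s /\ 0 < t <= s.
Proof.
  assert (Hs : 0 < s) by (apply sqrt_lt_R0; lra).
  assert (Hss : s * s = delta) by (apply sqrt_sqrt; lra).
  assert (s <= 1) by nra.
  assert (Ht : t = s * s * s) by (unfold t; fold s; rewrite <- Hss; ring).
  repeat split; try lra; rewrite Ht; nra.
Qed.

Lemma mdet_Adelta_neq0 z : inbox x (1 / 4) z -> mdet (Adelta b sigma delta z) <> 0.
Proof.
  intros Hz; destruct sqrt_delta_facts as [Hs [_ [_ [Ht _]]]].
  change (Adelta b sigma delta z)
    with (Mat2 (vscal s (col1 (Amat b sigma z))) (vscal t (col2 (Amat b sigma z)))).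
  rewrite mdet_scaled; pose proof (Hdet z Hz).
  apply Rmult_integral_contrapositive_currified; [nra|].
  intro E0; rewrite E0, Rabs_R0 in *; lra.
Qed.

Lemma l1_minv_M_le v : t * L * l1 (mapply (minv M) v) <= 10 * N ^ 2 * l1 v.
Proof.
  destruct sqrt_delta_facts as [Hs [_ [_ Ht]]].
  pose proof (inbox_center x (1 / 4) ltac:(lra)) as Hx.
  assert (HdA : mdet (Amat b sigma x) <> 0)
    by (pose proof (Hdet x Hx); intro E0; rewrite E0, Rabs_R0 in *; lra).
  pose proof (l1_minv_scaled (Amat b sigma x) s t v Ht HdA) as Hinv.
  pose proof (l1_field_le sigma x N (fun z Hz => proj1 (Hbnd z Hz)) x Hx).
  pose proof (l1_bracket_le b sigma x N Hbnd x Hx).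
  cbn [col1 col2 Amat] in Hinv.
  change (Mat2 (vscal s (sigma x)) (vscal t (bracket b sigma x))) with M in Hinv.
  pose proof (Hdet x Hx); pose proof (l1_ge0 v); pose proof (l1_ge0 (mapply (minv M) v)).
  assert (t * L * l1 (mapply (minv M) v)
          <= t * Rabs (mdet (Amat b sigma x)) * l1 (mapply (minv M) v))
    by (apply Rmult_le_compat_r; [|apply Rmult_le_compat_l]; lra).
  assert ((l1 (sigma x) + l1 (bracket b sigma x)) * l1 v <= 10 * N ^ 2 * l1 v)
    by (apply Rmult_le_compat_r; nra).
  lra.
Qed.

Lemma Rabs_w_le : Rabs (fst w) <= r /\ Rabs (snd w) <= r.
Proof.
  pose proof (Rabs_fst_le_enorm w); pose proof (Rabs_snd_le_enorm w).
  change (enorm w <= r) in Hw; lra.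
Qed.

Lemma r_bounds : 0 <= r /\ r * N ^ 7 <= 1 / 4000.
Proof. pose proof (enorm_ge0 w); change (enorm w <= r) in Hw; lra. Qed.

Lemma displacement_eq : vsub y x =
  vadd (vscal (- (fst w * s)) (sigma x)) (vscal (- (snd w * t)) (bracket b sigma x)).
Proof.
  pose proof (inbox_center x (1 / 4) ltac:(lra)) as Hx.
  pose proof (minv_right M (vsub x y) (mdet_Adelta_neq0 x Hx)) as Exy; fold w in Exy.
  replace (vsub y x) with (vscal (-1) (vsub x y))
    by (unfold vsub, vscal; cbn [fst snd]; f_equal; ring).
  rewrite <- Exy; unfold M.
  change (Adelta b sigma delta x) with (Mat2 (vscal s (sigma x)) (vscal t (bracket b sigma x))).
  unfold mapply, vadd, vscal; cbn [fst snd col1 col2]; f_equal; ring.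
Qed.

Lemma l1_displacement_le : l1 (vsub y x) <= 10 * r * s * N ^ 2.
Proof.
  destruct sqrt_delta_facts as [Hs [_ [_ Ht]]]; destruct Rabs_w_le as [Hw1 Hw2].
  pose proof (inbox_center x (1 / 4) ltac:(lra)) as Hx.
  pose proof (l1_field_le sigma x N (fun z Hz => proj1 (Hbnd z Hz)) x Hx).
  pose proof (l1_bracket_le b sigma x N Hbnd x Hx).
  rewrite displacement_eq; eapply Rle_trans; [apply l1_add|]; rewrite !l1_scal.
  rewrite !Rabs_Ropp, !Rabs_mult, (Rabs_pos_eq s), (Rabs_pos_eq t) by lra.
  pose proof (Rabs_pos (fst w)); pose proof (Rabs_pos (snd w)).
  pose proof (l1_ge0 (sigma x)); pose proof (l1_ge0 (bracket b sigma x)).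
  assert (Rabs (fst w) * s * l1 (sigma x) <= r * s * (2 * N))
    by (apply Rmult_le_compat; try apply Rmult_le_compat; nra).
  assert (Rabs (snd w) * t * l1 (bracket b sigma x) <= r * s * (8 * (N * N)))
    by (apply Rmult_le_compat; try apply Rmult_le_compat; nra).
  assert (0 <= r * s) by (apply Rmult_le_pos; lra).
  assert (r * s * N <= r * s * (N * N)) by (apply Rmult_le_compat_l; nra).
  replace (N ^ 2) with (N * N) by ring; lra.
Qed.

Lemma y_inbox : inbox x (1 / 8) y.
Proof.
  apply inbox_of_l1; pose proof l1_displacement_le.
  destruct sqrt_delta_facts as [Hs [Hs1 _]]; destruct r_bounds as [Hr0 HrN].
  pose proof (Rle_pow N 2 7 HN ltac:(lia)); pose proof (pow_le N 2 ltac:(lra)).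
  assert (r * s * N ^ 2 <= r * N ^ 7)
    by (apply Rmult_le_compat; [apply Rmult_le_pos | | nra |]; nra).
  lra.
Qed.

Lemma col2_E_le : L * l1 (col2 E) <= 1600 * r * N ^ 7.
Proof.
  destruct sqrt_delta_facts as [Hs [Hs1 [_ Ht]]]; destruct r_bounds as [Hr0 _].
  set (dB := vsub (bracket b sigma y) (bracket b sigma x)).
  assert (Hcol : col2 E = mapply (minv M) (vscal t dB)).
  { unfold E, mmul, msub, M, Adelta; cbn [col1 col2]; rewrite vsub_scal; reflexivity. }
  pose proof (l1_minv_M_le (vscal t dB)) as Hinv.
  rewrite <- Hcol, l1_scal, Rabs_pos_eq in Hinv by lra.
  pose proof (l1_bracket_lipschitz b sigma x N Hb Hsigma Hbnd y y_inbox) as HdB; fold dB in HdB.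
  pose proof l1_displacement_le as Hh.
  pose proof (l1_ge0 dB); pose proof (l1_ge0 (vsub y x)); pose proof (l1_ge0 (col2 E)).
  assert (HP : 1 <= N ^ 2) by (rewrite <- (pow1 2); apply pow_incr; lra).
  assert (HdB' : l1 dB <= 160 * r * s * N ^ 4).
  { replace (160 * r * s * N ^ 4) with (16 * (N * N) * (10 * r * s * N ^ 2)) by ring.
    eapply Rle_trans; [apply HdB|]; apply Rmult_le_compat_l; nra. }
  assert (Hmain : t * (L * l1 (col2 E)) <= t * (1600 * r * N ^ 7)).
  { replace (t * (L * l1 (col2 E))) with (t * L * l1 (col2 E)) by ring.
    eapply Rle_trans; [apply Hinv|].
    replace (10 * N ^ 2 * (t * l1 dB)) with (t * (10 * N ^ 2 * l1 dB)) by ring.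
    apply Rmult_le_compat_l; [lra|].
    replace (1600 * r * N ^ 7) with (10 * N ^ 2 * (160 * r * N ^ 5)) by ring.
    apply Rmult_le_compat_l; [lra|].
    replace (160 * r * N ^ 5) with (160 * r * s * N ^ 4 + 160 * r * (N ^ 5 - s * N ^ 4)) by ring.
    pose proof (Rle_pow N 4 5 HN ltac:(lia)); pose proof (pow_le N 4 ltac:(lra)).
    assert (0 <= r * (N ^ 5 - s * N ^ 4)) by (apply Rmult_le_pos; nra).
    lra. }
  apply Rmult_le_reg_l in Hmain; lra.
Qed.

Let R := vsub (vsub (sigma y) (sigma x)) (mapply (jac sigma x) (vsub y x)).

Lemma jac_sigma_displacement : mapply (jac sigma x) (vsub y x) =
  vadd (vscal (- (fst w * s) * kappa x) (sigma x))
       (vscal (- (snd w * t)) (mapply (jac sigma x) (bracket b sigma x))).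
Proof.
  rewrite displacement_eq, mapply_add, !mapply_scal.
  change (mapply (jac sigma x) (sigma x)) with (dirder sigma sigma x); rewrite Hkappa.
  unfold vadd, vscal; cbn [fst snd]; f_equal; ring.
Qed.

Lemma col1_E_decomp : col1 E =
  vadd (vscal (- (fst w * s * s * kappa x)) (mapply (minv M) (sigma x)))
       (vadd (vscal (- (snd w * t * s))
                    (mapply (minv M) (mapply (jac sigma x) (bracket b sigma x))))
             (vscal s (mapply (minv M) R))).
Proof.
  change (col1 E) with (mapply (minv M) (vsub (vscal s (sigma y)) (vscal s (sigma x)))).
  rewrite vsub_scal.
  replace (vsub (sigma y) (sigma x)) with (vadd (mapply (jac sigma x) (vsub y x)) R)
    by (unfold R, vadd, vsub; cbn [fst snd]; f_equal; ring).
  rewrite jac_sigma_displacement, !mapply_scal, !mapply_add, !mapply_scal.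
  unfold vadd, vscal; cbn [fst snd]; f_equal; ring.
Qed.

Lemma s_mul_l1_minv_sigma : s * l1 (mapply (minv M) (sigma x)) = 1.
Proof.
  destruct sqrt_delta_facts as [Hs _].
  pose proof (minv_col1 M (mdet_Adelta_neq0 x (inbox_center x (1 / 4) ltac:(lra)))) as H1.
  change (col1 M) with (vscal s (sigma x)) in H1; rewrite mapply_scal in H1.
  apply (f_equal l1) in H1; rewrite l1_scal, Rabs_pos_eq in H1 by lra.
  rewrite H1; unfold l1; cbn [fst snd]; rewrite Rabs_R1, Rabs_R0; ring.
Qed.

Lemma minv_jac_bracket_le :
  t * L * l1 (mapply (minv M) (mapply (jac sigma x) (bracket b sigma x))) <= 160 * N ^ 5.
Proof.
  pose proof (inbox_center x (1 / 4) ltac:(lra)) as Hx.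
  eapply Rle_trans; [apply l1_minv_M_le|].
  pose proof (l1_jac_le sigma x N (fun z Hz => proj1 (Hbnd z Hz)) x (bracket b sigma x) Hx).
  pose proof (l1_bracket_le b sigma x N Hbnd x Hx).
  assert (HP : 0 <= N ^ 2) by (apply pow_le; lra).
  assert (l1 (mapply (jac sigma x) (bracket b sigma x)) <= 16 * N ^ 3)
    by (replace (16 * N ^ 3) with (2 * N * (8 * (N * N))) by ring; nra).
  replace (160 * N ^ 5) with (10 * N ^ 2 * (16 * N ^ 3)) by ring.
  apply Rmult_le_compat_l; lra.
Qed.

Lemma minv_remainder_le : t * L * l1 (mapply (minv M) R) <= 2000 * r ^ 2 * s ^ 2 * N ^ 7.
Proof.
  destruct sqrt_delta_facts as [Hs _]; destruct r_bounds as [Hr0 _].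
  eapply Rle_trans; [apply l1_minv_M_le|].
  pose proof (l1_taylor1_le sigma x N Hsigma (fun z Hz => proj1 (Hbnd z Hz)) y y_inbox) as HR.
  fold R in HR.
  pose proof l1_displacement_le as Hh; pose proof (l1_ge0 (vsub y x)).
  assert (Hh2 : l1 (vsub y x) * l1 (vsub y x) <= 100 * r ^ 2 * s ^ 2 * N ^ 4).
  { replace (100 * r ^ 2 * s ^ 2 * N ^ 4) with ((10 * r * s * N ^ 2) * (10 * r * s * N ^ 2))
      by ring.
    apply Rmult_le_compat; lra. }
  assert (HN0 : 0 <= N ^ 2) by (apply pow_le; lra).
  replace (2000 * r ^ 2 * s ^ 2 * N ^ 7)
    with (10 * N ^ 2 * (2 * N * (100 * r ^ 2 * s ^ 2 * N ^ 4))) by ring.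
  apply Rmult_le_compat_l; [lra|].
  eapply Rle_trans; [apply HR|]; apply Rmult_le_compat_l; lra.
Qed.

Lemma l1_col1_E_le : l1 (col1 E) <=
  Rabs (fst w) * s * Rabs (kappa x)
  + Rabs (snd w) * s * (t * l1 (mapply (minv M) (mapply (jac sigma x) (bracket b sigma x))))
  + s * l1 (mapply (minv M) R).
Proof.
  destruct sqrt_delta_facts as [Hs [_ [_ Ht]]].
  rewrite col1_E_decomp.
  eapply Rle_trans; [apply l1_add|]; eapply Rle_trans; [apply Rplus_le_compat_l, l1_add|].
  rewrite !l1_scal, !Rabs_Ropp, !Rabs_mult, (Rabs_pos_eq s), (Rabs_pos_eq t) by lra.
  pose proof s_mul_l1_minv_sigma as HS.
  replace (Rabs (fst w) * s * s * Rabs (kappa x) * l1 (mapply (minv M) (sigma x)))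
    with (Rabs (fst w) * s * Rabs (kappa x) * (s * l1 (mapply (minv M) (sigma x)))) by ring.
  rewrite HS; lra.
Qed.

Lemma remainder_term_le : L * (s * l1 (mapply (minv M) R)) <= r * N ^ 7 / 2.
Proof.
  destruct sqrt_delta_facts as [Hs [_ [Ht3 _]]]; destruct r_bounds as [Hr0 HrN].
  pose proof minv_remainder_le as HR.
  assert (Hs3 : s * s * (L * (s * l1 (mapply (minv M) R))) <= s * s * (2000 * r ^ 2 * N ^ 7))
    by (rewrite Ht3 in HR; nra).
  apply Rmult_le_reg_l in Hs3; [|nra].
  assert (r <= 1 / 4000)
    by (pose proof (Rle_pow N 0 7 HN ltac:(lia)) as H0; rewrite pow_O in H0; nra).
  assert (0 <= r * N ^ 7) by (apply Rmult_le_pos; [|apply pow_le]; lra).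
  assert (2000 * r ^ 2 * N ^ 7 <= r * N ^ 7 / 2)
    by (replace (2000 * r ^ 2 * N ^ 7) with (2000 * r * (r * N ^ 7)) by ring; nra).
  lra.
Qed.

Lemma col1_E_le : L * l1 (col1 E) <= 162 * r * N ^ 7.
Proof.
  destruct sqrt_delta_facts as [Hs [Hs1 [_ Ht]]]; destruct r_bounds as [Hr0 _].
  destruct Rabs_w_le as [Hw1 Hw2].
  pose proof l1_col1_E_le as Hcol; pose proof minv_jac_bracket_le as HJB.
  pose proof remainder_term_le as HR.
  set (c := l1 (mapply (minv M) (mapply (jac sigma x) (bracket b sigma x)))) in *.
  assert (Hc : 0 <= t * L * c) by (apply Rmult_le_pos; [apply Rmult_le_pos|apply l1_ge0]; lra).
  pose proof (Rle_pow N 1 7 HN ltac:(lia)); pose proof (Rle_pow N 5 7 HN ltac:(lia)).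
  rewrite pow_1 in *; pose proof (pow_le N 5 ltac:(lra)).
  pose proof (Rabs_pos (fst w)); pose proof (Rabs_pos (snd w)); pose proof (Rabs_pos (kappa x)).
  assert (T1 : L * (Rabs (fst w) * s * Rabs (kappa x)) <= r * N ^ 7).
  { assert (Rabs (fst w) * s * Rabs (kappa x) <= r * N)
      by (apply Rmult_le_compat; [apply Rmult_le_pos | | |]; nra).
    assert (0 <= Rabs (fst w) * s * Rabs (kappa x))
      by (apply Rmult_le_pos; [apply Rmult_le_pos|]; lra).
    nra. }
  assert (T2 : L * (Rabs (snd w) * s * (t * c)) <= 160 * r * N ^ 7).
  { replace (L * (Rabs (snd w) * s * (t * c))) with (Rabs (snd w) * s * (t * L * c)) by ring.
    apply Rle_trans with (r * (160 * N ^ 5)); [|nra].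
    apply Rmult_le_compat; [apply Rmult_le_pos | | |]; nra. }
  pose proof (l1_ge0 (col1 E)); nra.
Qed.

Lemma relative_perturbation_le : l1 (col1 E) + l1 (col2 E) <= 1 / 2.
Proof.
  pose proof col1_E_le; pose proof col2_E_le; destruct r_bounds as [Hr0 _].
  apply Rmult_le_reg_l with L; lra.
Qed.

End PerturbationEstimate.

Lemma invC_mul_pow_le K n N L : 0 < K -> 0 < L <= 1 -> 1 <= N -> (1 <= n)%nat ->
  K * invC K (INR n) N L * N ^ n <= L.
Proof.
  intros HK HL HN Hn; unfold invC.
  rewrite Rpower_pow by (apply Rdiv_lt_0_compat; lra).
  unfold Rdiv; rewrite Rpow_mult_distr, pow_inv.
  assert (N ^ n <> 0) by (apply pow_nonzero; lra).
  assert (L ^ n <> 0) by (apply pow_nonzero; lra).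
  replace (K * / (K * (N ^ n * / L ^ n)) * N ^ n) with (L ^ n) by (field; lra).
  destruct n as [|m]; [lia|]; cbn [pow].
  assert (L ^ m <= 1 ^ m) by (apply pow_incr; lra); rewrite pow1 in *.
  pose proof (pow_le L m ltac:(lra)); nra.
Qed.

Lemma local_hyps_on_box b sigma kappa x N L : local_hyps b sigma kappa x N L ->
  Ck_field 2 sigma /\ Ck_field 2 b /\
  (forall z, inbox x (1 / 4) z -> vderivs2_le N sigma z /\ vderivs2_le N b z) /\
  (forall z, inbox x (1 / 4) z -> L <= Rabs (mdet (Amat b sigma z))) /\
  dirder sigma sigma x = vscal (kappa x) (sigma x) /\ Rabs (kappa x) <= N.
Proof.
  intros [[Hb Hb'] [[Hs Hs'] [HL0 [_ [_ [Hball [_ Hkappa]]]]]]].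
  pose proof (inbox_enorm_lt x x (inbox_center x (1 / 4) ltac:(lra))) as Hx.
  destruct (Hkappa x Hx) as [Hkx [Hkx_le _]]; pose proof (proj2 (Hball x Hx)).
  split; [split; apply Ck_S_Ck; assumption|].
  split; [split; apply Ck_S_Ck; assumption|].
  split; [intros z Hz; apply nfun_vderivs2_le, (Hball z (inbox_enorm_lt x z Hz))|].
  split; [intros z Hz; apply mdet_ge_of_eigen_ge, (Hball z (inbox_enorm_lt x z Hz)); lra|].
  split; [exact Hkx | lra].
Qed.

Theorem lemmaA4 :
  exists Kr qr Kd qd : R, 1 <= Kr /\ 1 <= qr /\ 1 <= Kd /\ 1 <= qd /\
  forall (sigma b : vfield) (kappa : pt -> R) (x : pt) (N L : R),
    local_hyps b sigma kappa x N L ->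
    forall (y : pt) (delta : R),
      0 < delta -> delta <= invC Kd qd N L ->
      normA (Adelta b sigma delta x) (vsub x y) <= invC Kr qr N L ->
      forall xi : pt,
        / 4 * normA (Adelta b sigma delta x) xi <= normA (Adelta b sigma delta y) xi /\
        normA (Adelta b sigma delta y) xi <= 4 * normA (Adelta b sigma delta x) xi.
Proof.
  exists 4000, 7, 1, 1; do 4 (split; [lra|]).
  intros sigma b kappa x N L Hloc y delta Hdelta0 Hdelta Hw xi.
  pose proof Hloc as [_ [_ [HL0 [HL1 [HN _]]]]].
  destruct (local_hyps_on_box b sigma kappa x N L Hloc)
    as [Hsigma [Hb [Hbnd [Hdet [Hkappa Hkappa_le]]]]].
  assert (HL : 0 < L <= 1) by lra.
  assert (Hr : 4000 * invC 4000 7 N L * N ^ 7 <= L).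
  { pose proof (invC_mul_pow_le 4000 7 N L ltac:(lra) HL HN ltac:(lia)) as H.
    replace (INR 7) with 7 in H by (simpl; lra); exact H. }
  assert (Hdelta1 : 0 < delta <= 1).
  { pose proof (invC_mul_pow_le 1 1 N L ltac:(lra) HL HN ltac:(lia)) as H.
    replace (INR 1) with 1 in H by (simpl; lra); nra. }
  pose proof (inbox_center x (1 / 4) ltac:(lra)) as Hx.
  pose proof (y_inbox sigma b x y N L delta _ HN HL Hdelta1 Hbnd Hdet Hr Hw) as Hy.
  apply normA_compare.
  - exact (mdet_Adelta_neq0 sigma b x L delta HL Hdelta1 Hdet x Hx).
  - apply (mdet_Adelta_neq0 sigma b x L delta HL Hdelta1 Hdet y).
    exact (inbox_le x (1 / 8) (1 / 4) y ltac:(lra) Hy).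
  - exact (relative_perturbation_le sigma b kappa x y N L delta _ HN HL Hdelta1
             Hsigma Hb Hbnd Hdet Hkappa Hkappa_le Hr Hw).
Qed.
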